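(* Let $\tau>0$, $a\in\mathbb{R}$, $\varepsilon>0$, and let $v:[0,\tau]\times\mathbb{R}\to\mathbb{R}$ satisfy: (i) for every $t\in[0,\tau]$, the function $x\mapsto v(t,x)$ is decreasing (nonincreasing); (ii) for every Lipschitz curve $t\mapsto\gamma(t)$ with $\dot\gamma(t)\ge a-\varepsilon$, the function $t\mapsto v(t,\gamma(t))$ is decreasing (nonincreasing). Let $y,z:[0,\tau]\to\mathbb{R}$ be Lipschitz with $y(0)=z(0)=0$ and $\dot y(t)\ge a$, $\dot z(t)\ge a$ for a.e. $t\in[0,\tau]$. Define $v_{max}=\sup_{t,x}v(t,x)$, $v_{min}=\inf_{t,x}v(t,x)$ and $\delta(t)=\sup_{0<s<t}|y(s)-z(s)|$. Then for every $t\in[0,\tau]$, $$\int_0^t\big|v(s,y(s))-v(s,z(s))\big|\,ds\;\le\;2\delta(t)\cdot\frac{v_{max}-v_{min}}{\varepsilon}.$$ *)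

From HB Require Import structures.
From mathcomp Require Import all_boot all_order all_algebra.
From mathcomp Require Import all_classical all_reals all_analysis.
Set Implicit Arguments. Unset Strict Implicit. Unset Printing Implicit Defensive.
Import Order.TTheory GRing.Theory Num.Theory.
Import numFieldNormedType.Exports.
Local Open Scope classical_set_scope.
Local Open Scope ring_scope.

Definition lip_on_0 {R : realType} (tau : R) (g : R -> R) : Prop :=
  exists L : R, forall s t, s \in `[0, tau] -> t \in `[0, tau] ->
    `|g s - g t| <= L * `|s - t|.

Definition ae_deriv_ge_0 {R : realType} (tau : R) (g : R -> R) (b : R) : Prop :=
  {ae (@lebesgue_measure R), forall t, t \in `]0, tau[ ->
      derivable g t 1 /\ b <= derive1 g t}.

Definition noninc_on_0 {R : realType} (tau : R) (f : R -> R) : Prop :=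
  forall s t, s \in `[0, tau] -> t \in `[0, tau] -> s <= t -> f t <= f s.

Definition vmax {R : realType} (tau : R) (v : R -> R -> R) : \bar R :=
  ereal_sup [set r : \bar R | exists s x, s \in `[0, tau] /\ r = (v s x)%:E].
Definition vmin {R : realType} (tau : R) (v : R -> R -> R) : \bar R :=
  ereal_inf [set r : \bar R | exists s x, s \in `[0, tau] /\ r = (v s x)%:E].

(* delta(t) = sup_{0<s<t} |y(s) - z(s)|  (real sup; = 0 for t = 0) *)
Definition delta {R : realType} (y z : R -> R) (t : R) : R :=
  sup [set r : R | exists s, 0 < s < t /\ r = `|y s - z s|].

From HB Require Import structures.
From mathcomp Require Import all_boot all_order all_algebra.
From mathcomp Require Import all_classical all_reals all_analysis.
From mathcomp Require Import ring lra measurable_realfun.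
Import Order.TTheory GRing.Theory Num.Theory.
Import numFieldNormedType.Exports.
Local Open Scope classical_set_scope.
Local Open Scope ring_scope.

(* Put [h = 2 delta / eps].  Since [v s] is nonincreasing and [|y s - z s| <= delta],
   the integrand at [s] is at most [v s (y s - delta) - v s (y s + delta)].  The curve
   [r |-> y r + delta + eps (s - r)] still has slope [>= a - eps], so [v] decreases
   along it from [(s, y s + delta)] to [(s + h, y (s + h) - delta)].  Hence with
   [g s = v s (y s - delta) - vmin] on [0, t[ and [g = 0] elsewhere, the integrand
   plus [g (s + h)] is at most [g s]; integrating, the integrals of [g] over [0, t[
   and [h, t + h[ cancel up to [\int_0^h g <= h (vmax - vmin)]. *)

Section lebesgue_real_line.
Context {R : realType}.
Local Notation mu := (@lebesgue_measure R).

Lemma measurable_addr (h : R) : measurable_fun setT (fun x : R => x + h).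
Proof. by apply: measurable_funD => //; exact: measurable_cst. Qed.

Lemma lebesgue_measure_pushforward_addr (h : R) (A : set R) : measurable A ->
  pushforward mu ((fun x : R => x + h) : R -> measurableTypeR R) A = mu A.
Proof.
(* [mh] in the context lets the measure structure of the pushforward be inferred. *)
have mh := measurable_addr h.
move=> mA; apply/esym/lebesgue_measure_unique => //= _ [[c d]] _ <-.
rewrite /pushforward.
have -> : (fun x => x + h) @^-1` `]c, d]%classic = `]c - h, d - h]%classic.
  by apply/seteqP; split => x /=; rewrite !in_itv/= ltrBlDr lerBrDr.
rewrite !lebesgue_measure_itv/= !lte_fin ltrD2r; case: ifP => // _.
by rewrite -!EFinD; congr (_%:E); ring.
Qed.

Lemma ge0_integral_addr (f : R -> \bar R) (a b h : R) :
  measurable_fun setT f -> (forall x, 0 <= f x)%E ->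
  (\int[mu]_(x in `[a, b[) f ((x : R) + h)%R
   = \int[mu]_(x in `[(a + h)%R, (b + h)%R[) f x)%E.
Proof.
move=> mf f0; have mh := measurable_addr h.
rewrite [RHS](eq_measure_integral
  (pushforward mu ((fun x : R => x + h) : R -> measurableTypeR R))); last first.
  by move=> A mA _; exact/esym/lebesgue_measure_pushforward_addr.
symmetry; etransitivity; first apply: ge0_integral_pushforward => //.
- exact: measurable_funTS.
- congr (integral _ _ _); apply/seteqP; split => x /=; rewrite !in_itv/=.
    by rewrite lerD2r ltrD2r.
  by rewrite lerD2r ltrD2r.
Qed.

Lemma ge0_integral_itv_co_split (f : R -> \bar R) (a c b : R) :
  measurable_fun setT f -> (forall x, 0 <= f x)%E -> a <= c -> c <= b ->
  (\int[mu]_(x in `[a, b[) f x =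
   \int[mu]_(x in `[a, c[) f x + \int[mu]_(x in `[c, b[) f x)%E.
Proof.
move=> mf f0 ac cb.
rewrite (@itv_bndbnd_setU _ _ (BLeft a) (BLeft c) (BLeft b)) ?bnd_simp //.
apply: ge0_integral_setU => //; first exact: measurable_funTS.
rewrite disj_set2E; apply/eqP/seteqP; split => x //=.
by rewrite !in_itv /= => -[/andP[_ xc] /andP[cx _]]; lra.
Qed.

Lemma ge0_integral_itv_co_le {g : R -> R} {p q C : R} :
  p <= q -> measurable_fun setT g -> (forall s, 0 <= g s <= C) ->
  (\int[mu]_(s in `[p, q[) (g s)%:E <= (C * (q - p))%:E)%E.
Proof.
move=> pq mg g0C.
apply: (@le_trans _ _ (\int[mu]_(s in `[p, q[) C%:E)%E).
  apply: ge0_le_integral => //.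
  - by move=> s _; rewrite lee_fin; case/andP: (g0C s).
  - by apply/measurable_EFinP; exact: measurable_funTS.
  - by move=> s _; rewrite lee_fin; case/andP: (g0C s).
rewrite integral_cst //= lebesgue_measure_itv /= lte_fin.
by case: ltgtP pq => // -> _; rewrite subrr mulr0 mule0.
Qed.

Lemma ge0_integral_itv_co_le_shift {g : R -> \bar R} {a b h : R} :
  measurable_fun setT g -> (forall s, 0 <= g s)%E -> 0 <= h -> a + h <= b ->
  (\int[mu]_(s in `[(a + h)%R, b[) g s <= \int[mu]_(s in `[a, b[) g ((s : R) + h)%R)%E.
Proof.
move=> mg g0 h0 ahb; rewrite ge0_integral_addr //.
rewrite (@ge0_integral_itv_co_split _ (a + h) b (b + h)) // ?lerDl //.
by apply: leeDl; exact: integral_ge0.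
Qed.

Lemma ge0_integral_le_shift_telescope (f g : R -> R) (a b h C : R) :
  a <= b -> 0 <= h -> measurable_fun `[a, b[ f -> measurable_fun setT g ->
  (forall s, 0 <= f s) -> (forall s, 0 <= g s <= C) ->
  (forall s, a <= s < b -> f s + g (s + h) <= g s) ->
  (\int[mu]_(s in `[a, b[) (f s)%:E <= (C * h)%:E)%E.
Proof.
move=> ab h0 mf mg f0 g0C fgg.
have g0 s : (0 <= (g s)%:E)%E by rewrite lee_fin; case/andP: (g0C s).
have mgE : measurable_fun setT (fun s => (g s)%:E) by exact/measurable_EFinP.
have mgh : measurable_fun setT (fun s : R => (g (s + h))%:E).
  exact: (measurableT_comp mgE (measurable_addr h)).
have telescope : (\int[mu]_(s in `[a, b[) (f s)%:E
    + \int[mu]_(s in `[a, b[) (g ((s : R) + h))%:E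
    <= \int[mu]_(s in `[a, b[) (g s)%:E)%E.
  rewrite -ge0_integralD //; last 3 first.
  - by move=> s _; rewrite lee_fin.
  - exact/measurable_EFinP.
  - exact: measurable_funTS.
  apply: ge0_le_integral => //.
  - by move=> s _; rewrite adde_ge0 // lee_fin.
  - by apply: emeasurable_funD; [exact/measurable_EFinP | exact: measurable_funTS].
  - exact: measurable_funTS.
have gh0 : (0 <= \int[mu]_(s in `[a, b[) (g ((s : R) + h))%:E)%E.
  exact: integral_ge0.
have [b_le_ah|ah_lt_b] := leP b (a + h).
  apply: le_trans (le_trans (leeDl _ gh0) telescope) _.
  apply: le_trans (ge0_integral_itv_co_le ab mg g0C) _.
  rewrite lee_fin ler_wpM2l ?lerBlDl //.
  by have /andP[g0' /(le_trans g0')] := g0C a.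
have ah_le_b := ltW ah_lt_b.
rewrite (@ge0_integral_itv_co_split _ a (a + h) b mgE g0) ?lerDl // in telescope.
have tail_le : (\int[mu]_(s in `[(a + h)%R, b[) (g s)%:E
    <= \int[mu]_(s in `[a, b[) (g ((s : R) + h))%:E)%E.
  exact: ge0_integral_itv_co_le_shift mgE g0 h0 ah_le_b.
have tail_fin : (\int[mu]_(s in `[(a + h)%R, b[) (g s)%:E)%E \is a fin_num.
  rewrite ge0_fin_numE; last exact: integral_ge0.
  apply: le_lt_trans (ge0_integral_itv_co_le ah_le_b mg g0C) _.
  exact: ltry.
have := le_trans (leeD2l _ tail_le) telescope.
rewrite leeD2rE // => /le_trans; apply.
have := @ge0_integral_itv_co_le _ a (a + h) _ _ mg g0C.
rewrite [a + h]addrC addrK; apply.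
by rewrite lerDr.
Qed.

Lemma measurable_noninc_on_0 {tau : R} {f : R -> R} :
  0 <= tau -> noninc_on_0 tau f -> measurable_fun `[0, tau] f.
Proof.
move=> tau0 fni.
pose clamp s := Num.min (Num.max s 0) tau.
have clampI s : clamp s \in `[0, tau].
  by rewrite in_itv /= le_min ge_min le_max lexx tau0 orbT /= lexx orbT.
apply: (eq_measurable_fun (f \o clamp)).
  move=> s; rewrite inE /= in_itv /= => /andP[s0 st].
  by rewrite /= /clamp (max_idPl s0) (min_idPl st).
apply: (measurable_funS measurableT) => //.
apply: nonincreasing_measurable => // s t st; apply: fni => //.
by apply: le_min2 => //; exact: le_max2.
Qed.

End lebesgue_real_line.

Section lipschitz_derivative.
Context {R : realType}.
Implicit Types (tau b c k : R) (f g w : R -> R).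

Lemma lip_on_0D {tau f g} : lip_on_0 tau f -> lip_on_0 tau g -> lip_on_0 tau (f \+ g).
Proof.
move=> [Lf hf] [Lg hg]; exists (Lf + Lg) => s t sI tI.
rewrite /= opprD addrACA mulrDl.
by apply: le_trans (ler_normD _ _) (lerD (hf s t sI tI) (hg s t sI tI)).
Qed.

Lemma lip_on_0_affine tau c k : lip_on_0 tau (fun r => c - k * r).
Proof.
exists `|k| => s t _ _.
have -> : c - k * s - (c - k * t) = k * (t - s) by ring.
by rewrite normrM distrC.
Qed.

Lemma ae_deriv_ge_0_le {tau g b b'} :
  b' <= b -> ae_deriv_ge_0 tau g b -> ae_deriv_ge_0 tau g b'.
Proof.
move=> bb; apply: (filterS (F := almost_everywhere (@lebesgue_measure R))) => t gt tI.
by have [dg bg] := gt tI; split => //; exact: le_trans bb bg.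
Qed.

Lemma ae_deriv_ge_0D_affine {tau w b} c k :
  ae_deriv_ge_0 tau w b -> ae_deriv_ge_0 tau (w \+ (fun r => c - k * r)) (b - k).
Proof.
have -> : w \+ (fun r => c - k * r) = w + (cst c - k \*: id) by exact/funext.
apply: (filterS (F := almost_everywhere (@lebesgue_measure R))) => t wt tI.
have [/derivableP Dw bw] := wt tI.
have D := is_deriveD Dw
  (is_deriveB (is_derive_cst c t 1) (is_deriveZ k (is_derive_id t 1))).
by split=> //; rewrite derive1E derive_val sub0r -derive1E scaler1 lerD.
Qed.

End lipschitz_derivative.

Section delta_bounds.
Context {R : realType}.
Implicit Types (tau t : R) (g y z : R -> R).

Lemma lip_on_0_bounded {tau g} :
  lip_on_0 tau g -> exists C, forall s, s \in `[0, tau] -> `|g s| <= C.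
Proof.
move=> [L hL]; exists (`|g 0| + `|L| * tau) => s sI.
have /andP[s0 stau] : 0 <= s <= tau by rewrite in_itv in sI.
have zI : 0 \in `[0, tau] by rewrite in_itv /= lexx (le_trans s0 stau).
have := hL s 0 sI zI; rewrite subr0 (ger0_norm s0) => gs.
rewrite -[g s](subrK (g 0)) addrC; apply: le_trans (ler_normD _ _) _.
rewrite lerD2l; apply: le_trans gs _.
exact: le_trans (ler_wpM2r s0 (ler_norm L)) (ler_wpM2l (normr_ge0 L) stau).
Qed.

Lemma delta_ge0 y z t : 0 <= delta y z t.
Proof.
rewrite /delta; set E := [set r | _].
have [hasE|/sup_out -> //] := pselect (has_sup E).
have [[r Er] _] := hasE; apply: le_trans (sup_upper_bound hasE Er).
by case: Er => s [_ ->].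
Qed.

Lemma dist_le_delta tau y z t s : lip_on_0 tau y -> lip_on_0 tau z ->
  y 0 = z 0 -> t <= tau -> 0 <= s < t -> `|y s - z s| <= delta y z t.
Proof.
move=> ly lz yz0 ttau /andP[s0 st].
have [s_gt0|] := ltrP 0 s; last first.
  move=> s_le0; have -> : s = 0 by apply/le_anti; rewrite s_le0 s0.
  by rewrite yz0 subrr normr0 delta_ge0.
apply: sup_upper_bound; last by exists s; rewrite s_gt0 st.
split; first by exists `|y s - z s|, s; rewrite s_gt0 st.
have [Cy hy] := lip_on_0_bounded ly; have [Cz hz] := lip_on_0_bounded lz.
exists (Cy + Cz) => _ [r [/andP[r0 rt] ->]].
have rI : r \in `[0, tau] by rewrite in_itv /= (ltW r0) (le_trans (ltW rt) ttau).
exact: le_trans (ler_normB _ _) (lerD (hy r rI) (hz r rI)).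
Qed.

End delta_bounds.

Lemma noninc_dist_le {R : realType} {phi : R -> R} {p q d : R} :
  (forall x1 x2, x1 <= x2 -> phi x2 <= phi x1) -> `|p - q| <= d ->
  `|phi p - phi q| <= phi (p - d) - phi (p + d).
Proof.
move=> phi_ni pqd; have d0 := le_trans (normr_ge0 _) pqd.
move: pqd; rewrite ler_norml => /andP[qd pd].
have e1 : phi (p + d) <= phi q by apply: phi_ni; lra.
have e2 : phi q <= phi (p - d) by apply: phi_ni; lra.
have e3 : phi (p + d) <= phi p by apply: phi_ni; lra.
have e4 : phi p <= phi (p - d) by apply: phi_ni; lra.
by rewrite ler_norml; apply/andP; split; lra.
Qed.

Section along_curves.
Context {R : realType} {tau a eps : R} {v : R -> R -> R}.
Hypotheses (tau_ge0 : 0 <= tau) (eps_gt0 : 0 < eps).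
Hypothesis v_noninc_curve : forall gamma : R -> R, lip_on_0 tau gamma ->
  ae_deriv_ge_0 tau gamma (a - eps) -> noninc_on_0 tau (fun t => v t (gamma t)).
Implicit Types (w y z : R -> R).

Lemma noninc_on_0_drift {w} c k : lip_on_0 tau w -> ae_deriv_ge_0 tau w a ->
  0 <= k <= eps -> noninc_on_0 tau (fun r => v r (w r + (c - k * r))).
Proof.
move=> lw dw /andP[k0 keps].
have dgamma := ae_deriv_ge_0D_affine c k dw.
have := v_noninc_curve _ (lip_on_0D lw (lip_on_0_affine _ c k)).
by apply; apply: ae_deriv_ge_0_le _ dgamma; rewrite lerD2l lerN2.
Qed.

Lemma noninc_on_0_translate {w} c : lip_on_0 tau w -> ae_deriv_ge_0 tau w a ->
  noninc_on_0 tau (fun r => v r (w r + c)).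
Proof.
move=> lw dw s t sI tI st; have := noninc_on_0_drift c 0 lw dw _ s t sI tI st.
by rewrite !mul0r !subr0; apply; rewrite lexx ltW.
Qed.

Lemma v_drift_le {w} d s : lip_on_0 tau w -> ae_deriv_ge_0 tau w a ->
  0 <= d -> 0 <= s -> s + 2 * d / eps <= tau ->
  v (s + 2 * d / eps) (w (s + 2 * d / eps) - d) <= v s (w s + d).
Proof.
move=> lw dw d0 s0 sh_tau; set h := 2 * d / eps.
have h0 : 0 <= h by rewrite /h divr_ge0 ?mulr_ge0 // ltW.
have sI : s \in `[0, tau] by rewrite in_itv /= s0 (le_trans _ sh_tau) ?lerDl.
have shI : s + h \in `[0, tau] by rewrite in_itv /= sh_tau addr_ge0.
have := noninc_on_0_drift (d + eps * s) eps lw dw _ s (s + h) sI shI.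
have -> : w (s + h) + (d + eps * s - eps * (s + h)) = w (s + h) - d.
  by rewrite /h; field; rewrite gt_eqF.
have -> : w s + (d + eps * s - eps * s) = w s + d by ring.
by apply; rewrite ?lerDl // lexx ltW.
Qed.

Lemma measurable_dist_along {y z} :
  lip_on_0 tau y -> ae_deriv_ge_0 tau y a -> lip_on_0 tau z -> ae_deriv_ge_0 tau z a ->
  measurable_fun `[0, tau] (fun s => `|v s (y s) - v s (z s)|).
Proof.
move=> ly dy lz dz.
have along w : lip_on_0 tau w -> ae_deriv_ge_0 tau w a ->
    measurable_fun `[0, tau] (fun s => v s (w s)).
  move=> lw dw; apply: measurable_noninc_on_0 => //.
  by have := noninc_on_0_translate 0 lw dw; under eq_fun do rewrite addr0.
apply: measurableT_comp => //.
by apply: measurable_funB; [exact: along | exact: along].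
Qed.

Lemma integral_dist_along_co {y z t} :
  lip_on_0 tau y -> ae_deriv_ge_0 tau y a -> lip_on_0 tau z -> ae_deriv_ge_0 tau z a ->
  t <= tau ->
  (\int[@lebesgue_measure R]_(s in `[0%R, t]) (`|v s (y s) - v s (z s)|)%:E
   = \int[@lebesgue_measure R]_(s in `[0%R, t[) (`|v s (y s) - v s (z s)|)%:E)%E.
Proof.
move=> ly dy lz dz ttau; symmetry; apply: integral_itv_bndo_bndc.
apply/measurable_EFinP; apply: measurable_funS (measurable_dist_along ly dy lz dz) => //.
by apply: subset_itvl; rewrite bnd_simp.
Qed.

Lemma integral_dist_along_eq0 {y z t} :
  lip_on_0 tau y -> ae_deriv_ge_0 tau y a -> lip_on_0 tau z -> ae_deriv_ge_0 tau z a ->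
  t <= tau -> (forall s, 0 <= s < t -> y s = z s) ->
  (\int[@lebesgue_measure R]_(s in `[0%R, t]) (`|v s (y s) - v s (z s)|)%:E = 0)%E.
Proof.
move=> ly dy lz dz ttau yz; rewrite integral_dist_along_co //.
rewrite (eq_integral (cst 0%E)) ?integral0 // => s.
by rewrite inE /= in_itv /= => /yz ->; rewrite subrr normr0.
Qed.

Hypothesis v_noninc_x : forall t, t \in `[0, tau] ->
  forall x1 x2 : R, x1 <= x2 -> v t x2 <= v t x1.

Lemma integral_dist_along_le {y z} {t d M m : R} :
  lip_on_0 tau y -> ae_deriv_ge_0 tau y a -> lip_on_0 tau z -> ae_deriv_ge_0 tau z a ->
  t \in `[0, tau] -> 0 <= d -> (forall s, 0 <= s < t -> `|y s - z s| <= d) ->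
  (forall s x, s \in `[0, tau] -> m <= v s x <= M) ->
  (\int[@lebesgue_measure R]_(s in `[0%R, t]) (`|v s (y s) - v s (z s)|)%:E
    <= ((M - m) * (2 * d / eps))%:E)%E.
Proof.
move=> ly dy lz dz; rewrite in_itv /= => /andP[t0 ttau] d0 yz_le v_bnd.
set h := 2 * d / eps.
have h0 : 0 <= h by rewrite /h divr_ge0 ?mulr_ge0 // ltW.
have mdist := measurable_dist_along ly dy lz dz.
have sub_t : `[0, t[ `<=` `[0, tau] by apply: subset_itvl; rewrite bnd_simp.
rewrite integral_dist_along_co //.
have m_le_M : m <= M.
  have zI : 0 \in `[0, tau] by rewrite in_itv /= lexx tau_ge0.
  by have /andP[/le_trans] := v_bnd 0 0 zI; apply.
pose g := (fun s => v s (y s - d) - m) \_ `[0, t[.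
have g_bnd s : 0 <= g s <= M - m.
  rewrite /g patchE; case: ifPn => [/set_mem sI|_]; last first.
    by rewrite lexx subr_ge0.
  by have /andP[mv vM] := v_bnd s (y s - d) (sub_t _ sI); rewrite subr_ge0 mv lerB.
apply: (@ge0_integral_le_shift_telescope _ _ g) => //.
- exact: measurable_funS mdist.
- apply/(measurable_restrictT _ (measurable_itv `[0, t[)); apply: measurable_funB => //.
  have ni := noninc_on_0_translate (- d) ly dy.
  exact: measurable_funS (measurable_noninc_on_0 tau_ge0 ni).
move=> s /[dup] /andP[s0 st] /yz_le yzd.
have sI : s \in `[0, tau] by rewrite in_itv /= s0 (le_trans (ltW st) ttau).
have dist_le := noninc_dist_le (v_noninc_x _ sI) yzd.
have gs : g s = v s (y s - d) - m by rewrite /g patchE mem_set //= in_itv /= s0.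
have gsh : g (s + h) <= v s (y s + d) - m.
  rewrite /g patchE; case: ifPn => [/set_mem|_]; last first.
    by rewrite subr_ge0; have /andP[] := v_bnd s (y s + d) sI.
  rewrite /= in_itv /= => /andP[_ sht]; rewrite lerD2r.
  by apply: v_drift_le => //; exact: le_trans (ltW sht) ttau.
by rewrite gs; lra.
Qed.

End along_curves.

Lemma vmin_le_v_le_vmax {R : realType} {tau : R} (v : R -> R -> R) s x :
  s \in `[0, tau] -> (vmin tau v <= (v s x)%:E <= vmax tau v)%E.
Proof.
move=> sI; have vsx : [set r | exists s x, s \in `[0, tau] /\ r = (v s x)%:E] (v s x)%:E.
  by exists s, x.
by rewrite ereal_inf_lbound // ereal_sup_ubound.
Qed.

Lemma le_scaled_vmax_vmin {R : realType} {tau : R} (v : R -> R -> R) (u : \bar R)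
    (k1 k2 : R) : 0 <= tau -> 0 < k1 -> 0 < k2 ->
  (forall M m, (forall s x, s \in `[0, tau] -> m <= v s x <= M) ->
     (u <= ((M - m) * (k1 * k2))%:E)%E) ->
  (u <= k1%:E * (vmax tau v - vmin tau v) * k2%:E)%E.
Proof.
move=> tau0 k1_gt0 k2_gt0 u_le.
have rhs_pinfty : (k1%:E * +oo * k2%:E = +oo)%E.
  by rewrite gt0_muley ?lte_fin // gt0_mulye // lte_fin.
have zI : 0 \in `[0, tau] by rewrite in_itv /= lexx tau0.
have := vmin_le_v_le_vmax v 0 0 zI.
case Emax: (vmax tau v) => [M| |]; case Emin: (vmin tau v) => [m| |] //= v00.
- have v_bnd s x : s \in `[0, tau] -> m <= v s x <= M.
    by move=> sI; have := vmin_le_v_le_vmax v s x sI; rewrite Emax Emin !lee_fin.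
  apply: le_trans (u_le M m v_bnd) _; rewrite -EFinD -!EFinM lee_fin.
  by have -> : k1 * (M + - m) * k2 = (M - m) * (k1 * k2) by ring.
- by rewrite addey // rhs_pinfty leey.
- by rewrite addye // rhs_pinfty leey.
- by rewrite addye // rhs_pinfty leey.
- by move: v00 => /andP[_]; rewrite leeNy_eq.
- by move: v00 => /andP[_]; rewrite leeNy_eq.
Qed.

Theorem lemma4p1 (R : realType) (tau a eps : R) (v : R -> R -> R)
  (y z : R -> R) :
  0 < tau -> 0 < eps ->
  (forall t, t \in `[0, tau] ->
     forall x1 x2 : R, x1 <= x2 -> v t x2 <= v t x1) ->
  (forall gamma : R -> R, lip_on_0 tau gamma ->
     ae_deriv_ge_0 tau gamma (a - eps) ->
     noninc_on_0 tau (fun t => v t (gamma t))) ->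
  lip_on_0 tau y -> lip_on_0 tau z ->
  y 0 = 0 -> z 0 = 0 ->
  ae_deriv_ge_0 tau y a -> ae_deriv_ge_0 tau z a ->
  forall t, t \in `[0, tau] ->
    (\int[@lebesgue_measure R]_(s in `[0%R, t]) (`|v s (y s) - v s (z s)|)%:E
      <= (2 * delta y z t)%:E * (vmax tau v - vmin tau v) * (eps^-1)%:E)%E.
Proof.
move=> tau_gt0 eps_gt0 v_ni_x v_ni_curve ly lz y0 z0 dy dz t tI.
have tau0 := ltW tau_gt0.
have ttau : t <= tau by move: tI; rewrite in_itv => /andP[].
have yz_le s : 0 <= s < t -> `|y s - z s| <= delta y z t.
  by apply: dist_le_delta ly lz _ ttau; rewrite y0 z0.
have [d_eq0|d_neq0] := eqVneq (delta y z t) 0.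
  rewrite d_eq0 mulr0 !mul0e.
  rewrite (integral_dist_along_eq0 tau0 eps_gt0 v_ni_curve ly dy lz dz ttau) //.
  by move=> s /yz_le; rewrite d_eq0 normr_le0 subr_eq0 => /eqP.
apply: le_scaled_vmax_vmin => //.
- by rewrite mulr_gt0 // lt_def d_neq0 delta_ge0.
- by rewrite invr_gt0.
move=> M m v_bnd.
by have := integral_dist_along_le tau0 eps_gt0 v_ni_curve v_ni_x ly dy lz dz tI
  (delta_ge0 y z t) yz_le v_bnd.
Qed.
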